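(* Let $f:[0,\infty)\to[0,\infty)$ be non-increasing with $f(0)=1$ and $f\in C^4([0,\infty))$, let $\mathcal L(\gamma)=\int_0^\infty e^{-\gamma x}f(x)dx$ and $\gamma_{\min}=\inf\{\gamma\in\mathbb R:\mathcal L(\gamma)<\infty\}$, and assume that for every $\gamma>\gamma_{\min}$ and $j=0,1,2,3,4$, $e^{-\gamma x}f^{(j)}(x)\in L^1([0,\infty))$ and $e^{-\gamma x}f^{(j)}(x)\to0$ as $x\to\infty$. For $s\ge1$ and $\rho=1-\gamma/\sqrt s$ define $F_s(\rho)=\sum_{n=0}^\infty f\bigl(\tfrac{n+1}{\sqrt s}\bigr)\rho^{n+1}$ and $\gamma_s=-\sqrt s\ln(1-\gamma/\sqrt s)$. Then for $\gamma_{\min}<\gamma\le\sqrt s$, $F_s(\rho)=\sqrt s\,\mathcal L(\gamma_s)-\tfrac12+O(1/\sqrt s)$, where the $O(1/\sqrt s)$ holds uniformly in $\gamma$ in any compact subset of $(\gamma_{\min},\infty)$.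
   Context: $F_s(\rho)$ is the quantity $\sum_{n\ge0}p_s(0)\cdots p_s(n)\rho^{n+1}$ for an $s$-server system with admission control under the global control $p_s(0)\cdots p_s(n)=f((n+1)/\sqrt s)$. *)

From Stdlib Require Import Reals.
From Coquelicot Require Import Coquelicot.
Open Scope R_scope.

Definition has_integral_0_infty (g : R -> R) (l : R) : Prop :=
  is_RInt_gen g (at_point 0) (Rbar_locally p_infty) l.

Definition integrable_0_infty (g : R -> R) : Prop :=
  ex_RInt_gen g (at_point 0) (Rbar_locally p_infty).

Definition derive_on_nonneg (g : R -> R) (x l : R) : Prop :=
  filterlim (fun y => (g y - g x) / (y - x))
    (within (fun y => 0 <= y /\ y <> x) (locally x)) (locally l).

Definition continuous_on_nonneg_at (g : R -> R) (x : R) : Prop :=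
  filterlim g (within (fun y => 0 <= y) (locally x)) (locally (g x)).

Definition C4_nonneg (f : R -> R) (d : nat -> R -> R) : Prop :=
  (forall x, 0 <= x -> d 0%nat x = f x) /\
  (forall j x, (j < 4)%nat -> 0 <= x -> derive_on_nonneg (d j) x (d (S j) x)) /\
  (forall x, 0 <= x -> continuous_on_nonneg_at (d 4%nat) x).

(* The Laplace transform L(gamma) is finite (f >= 0, so this is convergence
   of the improper integral of the nonnegative integrand). *)
Definition laplace_finite (f : R -> R) (gam : R) : Prop :=
  integrable_0_infty (fun x => exp (- gam * x) * f x).

Definition gamma_min (f : R -> R) : Rbar :=
  Glb_Rbar (fun gam => laplace_finite f gam).

Definition gamma_s (s gam : R) : R := - sqrt s * ln (1 - gam / sqrt s).

Definition rho_of (s gam : R) : R := 1 - gam / sqrt s.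

Definition Fs_term (f : R -> R) (s rho : R) (n : nat) : R :=
  f (INR (S n) / sqrt s) * rho ^ (S n).

From Stdlib Require Import Reals Lra Lia.
From Coquelicot Require Import Coquelicot.
Open Scope R_scope.

(* Since exp (- gamma_s / sqrt s) = rho, F_s(rho) = sum_{n >= 1} g (n h) with
   g x = exp (- gamma_s x) f x and h = 1 / sqrt s, so h (g 0 / 2 + F_s(rho)) is the
   trapezoidal rule for the integral of g over [0, +oo) = L(gamma_s).  The Peano kernel
   (x - l) (l + h - x) / 2 of the rule is at most h^2 / 8, whence an error of at most
   h^2 / 8 times the integral of |g''|.  For gamma in [a, b] and s large, gamma_s lies in
   [a, M] with M = 2 (|a| + |b|), so |g''| is dominated by
   exp (- a x) (|f''| + 2 M |f'| + M^2 |f|), which is integrable because a > gamma_min;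
   multiplying by sqrt s gives the O(1 / sqrt s). *)

Lemma is_RInt_gen_ext_nonneg (phi psi : R -> R) (l : R) :
  (forall x, 0 <= x -> phi x = psi x) ->
  is_RInt_gen phi (at_point 0) (Rbar_locally p_infty) l ->
  is_RInt_gen psi (at_point 0) (Rbar_locally p_infty) l.
Proof.
  intros Heq. apply is_RInt_gen_ext.
  apply (Filter_prod _ _ _ (fun u => u = 0) (fun v => 0 < v)).
  - reflexivity.
  - exists 0. auto.
  - intros u v -> Hv x Hx. simpl in Hx.
    rewrite Rmin_left, Rmax_right in Hx by lra. apply Heq. lra.
Qed.

Lemma is_RInt_gen_0_infty_approx (phi : R -> R) (l eps : R) : 0 < eps ->
  is_RInt_gen phi (at_point 0) (Rbar_locally p_infty) l ->
  exists M, forall b, M < b -> exists y, is_RInt phi 0 b y /\ Rabs (y - l) < eps.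
Proof.
  intros Heps Hl.
  destruct (Hl (ball l eps) (locally_ball l (mkposreal eps Heps)))
    as [P Q HP [M HM] Hy].
  exists M. intros b Hb. exact (Hy 0 b HP (HM b Hb)).
Qed.

Lemma RInt_le_is_RInt_gen (phi : R -> R) (l T : R) :
  (forall x, 0 <= x -> 0 <= phi x) -> 0 <= T ->
  is_RInt_gen phi (at_point 0) (Rbar_locally p_infty) l ->
  RInt phi 0 T <= l.
Proof.
  intros Hphi HT Hl. destruct (Rle_or_lt (RInt phi 0 T) l) as [|Hlt]; [assumption|].
  exfalso.
  destruct (is_RInt_gen_0_infty_approx phi l (RInt phi 0 T - l) ltac:(lra) Hl) as [M HM].
  set (b := Rmax T M + 1).
  assert (HTb : T <= b) by (assert (Hm := Rmax_l T M); unfold b; lra).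
  destruct (HM b) as [y [Hy Hyl]]; [assert (Hm := Rmax_r T M); unfold b; lra|].
  assert (Hex : ex_RInt phi 0 b) by (exists y; exact Hy).
  assert (Htail : 0 <= RInt phi T b).
  { apply RInt_ge_0; [exact HTb|apply (ex_RInt_Chasles_2 phi 0); [lra|exact Hex]|].
    intros x Hx. apply Hphi. lra. }
  rewrite <- (is_RInt_unique _ _ _ _ Hy), <- (RInt_Chasles phi 0 T b) in Hyl.
  - unfold plus in Hyl; simpl in Hyl.
    assert (Habs := Rle_abs (RInt phi 0 T + RInt phi T b - l)). lra.
  - apply (ex_RInt_Chasles_1 phi 0 T b); [lra|exact Hex].
  - apply (ex_RInt_Chasles_2 phi 0 T b); [lra|exact Hex].
Qed.

Lemma is_lim_seq_INR_scal (h : R) : 0 < h -> is_lim_seq (fun N => INR N * h) p_infty.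
Proof.
  intros Hh.
  replace p_infty with (Rbar_mult p_infty h)
    by (apply is_Rbar_mult_unique, is_Rbar_mult_p_infty_pos; exact Hh).
  apply (is_lim_seq_scal_r INR h p_infty is_lim_seq_INR).
Qed.

Lemma is_lim_seq_RInt_grid (phi : R -> R) (l h : R) : 0 < h ->
  is_RInt_gen phi (at_point 0) (Rbar_locally p_infty) l ->
  is_lim_seq (fun N => RInt phi 0 (INR N * h)) l.
Proof.
  intros Hh Hl P [eps HP].
  destruct (is_RInt_gen_0_infty_approx phi l eps (cond_pos eps) Hl) as [M HM].
  destruct (is_lim_seq_INR_scal h Hh (fun x => M < x) (ex_intro _ M (fun x Hx => Hx)))
    as [N0 HN0].
  exists N0. intros N HN. destruct (HM _ (HN0 N HN)) as [y [Hy Hyl]].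
  apply HP. rewrite (is_RInt_unique _ _ _ _ Hy). exact Hyl.
Qed.

Fixpoint partial_sum (u : nat -> R) (N : nat) : R :=
  match N with O => 0 | S N => partial_sum u N + u N end.

Lemma sum_n_partial_sum (u : nat -> R) (N : nat) : sum_n u N = partial_sum u (S N).
Proof.
  induction N as [|N IH]; simpl.
  - rewrite sum_O. ring.
  - rewrite sum_Sn, IH. reflexivity.
Qed.

Section Trapezoid.

Variables (g g1 g2 H : R -> R) (h : R).
Hypothesis g_g1 : forall x, is_derive g x (g1 x).
Hypothesis g1_g2 : forall x, is_derive g1 x (g2 x).
Hypothesis g2_cont : forall x, continuous g2 x.
Hypothesis H_cont : forall x, continuous H x.
Hypothesis g2_le_H : forall x, 0 <= x -> Rabs (g2 x) <= H x.
Hypothesis h_pos : 0 < h.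

Let kernel (l x : R) : R := (x - l) * ((l + h) - x) / 2.

Let ex_RInt_cont (phi : R -> R) (a b : R) :
  (forall x, continuous phi x) -> ex_RInt phi a b.
Proof.
  intros Hc. apply (ex_RInt_continuous (V := R_CompleteNormedModule)). intros x _. apply Hc.
Qed.

Let g_cont x : continuous g x.
Proof.
  apply (ex_derive_continuous (K := R_AbsRing) (V := R_NormedModule)). exists (g1 x). apply g_g1.
Qed.

Let kernel_g2_cont l x : continuous (fun y => kernel l y * g2 y) x.
Proof.
  apply (continuous_mult (fun y => kernel l y) g2); [|apply g2_cont].
  apply (ex_derive_continuous (K := R_AbsRing) (V := R_NormedModule)).
  unfold kernel. auto_derive. exact I.
Qed.

Lemma is_RInt_trapezoid l :
  is_RInt (fun x => g x + kernel l x * g2 x) l (l + h) (h / 2 * (g l + g (l + h))).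
Proof.
  (* The trapezoidal rule in Peano-kernel form: [P] is an antiderivative of the integrand. *)
  set (P x := kernel l x * g1 x + (x - (l + h / 2)) * g x).
  replace (h / 2 * (g l + g (l + h))) with (minus (P (l + h)) (P l))
    by (unfold P, kernel, minus, plus, opp; simpl; field).
  apply (is_RInt_derive (V := R_CompleteNormedModule) P).
  - intros x _. unfold P, kernel. auto_derive.
    + repeat split; [exists (g2 x); apply g1_g2|exists (g1 x); apply g_g1].
    + rewrite (is_derive_unique (fun y : R => g y) x _ (g_g1 x)).
      rewrite (is_derive_unique (fun y : R => g1 y) x _ (g1_g2 x)). field.
  - intros x _. apply (continuous_plus g (fun y => kernel l y * g2 y)).
    + apply g_cont.
    + apply kernel_g2_cont.
Qed.

Let kernel_bounds l x : l <= x <= l + h -> 0 <= kernel l x <= h ^ 2 / 8.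
Proof.
  intros Hx. unfold kernel.
  assert (0 <= (2 * x - 2 * l - h) ^ 2) by apply pow2_ge_0.
  split; [|nra].
  assert (0 <= (x - l) * ((l + h) - x)) by (apply Rmult_le_pos; lra). lra.
Qed.

Lemma trapezoid_cell_error l : 0 <= l ->
  Rabs (h / 2 * (g l + g (l + h)) - RInt g l (l + h)) <= h ^ 2 / 8 * RInt H l (l + h).
Proof.
  intros Hl.
  assert (Hsplit : h / 2 * (g l + g (l + h))
      = RInt g l (l + h) + RInt (fun x => kernel l x * g2 x) l (l + h)).
  { rewrite <- (is_RInt_unique _ _ _ _ (is_RInt_trapezoid l)).
    apply (RInt_plus (V := R_CompleteNormedModule)); apply ex_RInt_cont;
      [apply g_cont|apply kernel_g2_cont]. }
  replace (h / 2 * (g l + g (l + h)) - RInt g l (l + h))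
    with (RInt (fun x => kernel l x * g2 x) l (l + h)) by lra.
  eapply Rle_trans; [apply abs_RInt_le; [lra|apply ex_RInt_cont, kernel_g2_cont]|].
  rewrite <- (RInt_scal (V := R_CompleteNormedModule)) by (apply ex_RInt_cont, H_cont).
  apply RInt_le; [lra| | |].
  - apply ex_RInt_cont. intros x. apply continuous_Rabs_comp, kernel_g2_cont.
  - apply ex_RInt_cont. intros x. apply continuous_mult; [apply continuous_const|apply H_cont].
  - intros x Hx. rewrite Rabs_mult, Rabs_pos_eq by (apply kernel_bounds; lra).
    unfold scal; simpl; unfold mult; simpl.
    apply Rmult_le_compat; [apply kernel_bounds; lra|apply Rabs_pos|apply kernel_bounds; lra|].
    apply g2_le_H. lra.
Qed.

Lemma trapezoid_composite_error N :
  Rabs (h / 2 * (g 0 + 2 * partial_sum (fun n => g (INR (S n) * h)) N - g (INR N * h))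
        - RInt g 0 (INR N * h)) <= h ^ 2 / 8 * RInt H 0 (INR N * h).
Proof.
  set (u n := g (INR (S n) * h)).
  induction N as [|N IH].
  - rewrite Rmult_0_l, !RInt_point. unfold zero; simpl.
    replace (h / 2 * (g 0 + 2 * 0 - g 0) - 0) with 0 by ring.
    rewrite Rabs_R0, Rmult_0_r. lra.
  - assert (HN : 0 <= INR N * h) by (apply Rmult_le_pos; [apply pos_INR|lra]).
    change (partial_sum u (S N)) with (partial_sum u N + g (INR (S N) * h)).
    replace (INR (S N) * h) with (INR N * h + h) by (rewrite S_INR; ring).
    rewrite <- (RInt_Chasles (V := R_CompleteNormedModule) g 0 (INR N * h))
      by apply ex_RInt_cont, g_cont.
    rewrite <- (RInt_Chasles (V := R_CompleteNormedModule) H 0 (INR N * h))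
      by apply ex_RInt_cont, H_cont.
    unfold plus; simpl.
    assert (Hcell := trapezoid_cell_error _ HN).
    eapply Rle_trans; [|apply Req_le; symmetry; apply Rmult_plus_distr_l].
    eapply Rle_trans; [|apply Rplus_le_compat; [exact IH|exact Hcell]].
    eapply Rle_trans; [|apply Rabs_triang]. right. f_equal. ring.
Qed.

End Trapezoid.

Lemma trapezoid_series_limit (u y I : nat -> R) (h g0 L E : R) :
  0 < h -> (forall n, 0 <= u n) -> is_lim_seq y 0 -> is_lim_seq I L ->
  (forall N, Rabs (h / 2 * (g0 + 2 * partial_sum u N - y N) - I N) <= E) ->
  exists Fs, is_series u Fs /\ Rabs (h / 2 * (g0 + 2 * Fs) - L) <= E.
Proof.
  intros Hh Hu Hy HI HE.
  assert (Hinc : forall N, partial_sum u N <= partial_sum u (S N))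
    by (intros N; simpl; specialize (Hu N); lra).
  assert (Hpos : forall N, 0 <= partial_sum u N)
    by (induction N as [|N IH]; simpl; [lra|specialize (Hu N); lra]).
  assert (Hup : forall N, partial_sum u N <= (E + I N + h / 2 * y N - h / 2 * g0) * / h).
  { intros N. apply Rmult_le_reg_l with h; [exact Hh|].
    replace (h * ((E + I N + h / 2 * y N - h / 2 * g0) * / h))
      with (E + I N + h / 2 * y N - h / 2 * g0) by (field; lra).
    specialize (HE N). apply Rabs_le_between in HE. lra. }
  assert (Hlim_up : is_lim_seq (fun N => (E + I N + h / 2 * y N - h / 2 * g0) * / h)
                      ((E + L + h / 2 * 0 - h / 2 * g0) * / h)).
  { apply is_lim_seq_mult'; [|apply is_lim_seq_const].
    apply is_lim_seq_minus'; [|apply is_lim_seq_const].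
    apply is_lim_seq_plus'; [apply is_lim_seq_plus'; [apply is_lim_seq_const|exact HI]|].
    apply is_lim_seq_scal_l with (lu := 0). exact Hy. }
  assert (HS := Lim_seq_correct _ (ex_lim_seq_incr _ Hinc)).
  assert (Hbelow := is_lim_seq_le _ _ _ _ Hup HS Hlim_up).
  assert (Habove := is_lim_seq_le _ _ _ _ Hpos (is_lim_seq_const 0) HS).
  destruct (Lim_seq (partial_sum u)) as [Fs| |]; [|contradiction|contradiction].
  exists Fs. split.
  - assert (Hser : is_lim_seq (sum_n u) Fs).
    { apply is_lim_seq_ext with (fun N => partial_sum u (S N)).
      - intros N. symmetry. apply sum_n_partial_sum.
      - exact (proj1 (is_lim_seq_incr_1 _ _) HS). }
    exact Hser.
  - assert (Herr : is_lim_seq (fun N => Rabs (h / 2 * (g0 + 2 * partial_sum u N - y N) - I N))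
                     (Rabs (h / 2 * (g0 + 2 * Fs - 0) - L))).
    { apply is_lim_seq_abs with (l := Finite _).
      apply is_lim_seq_minus'; [|exact HI].
      apply is_lim_seq_scal_l with (lu := Finite _).
      apply is_lim_seq_minus'; [|exact Hy].
      apply is_lim_seq_plus'; [apply is_lim_seq_const|].
      apply is_lim_seq_scal_l with (lu := Finite _). exact HS. }
    assert (Hle := is_lim_seq_le _ _ _ _ HE Herr (is_lim_seq_const E)).
    simpl in Hle. rewrite Rminus_0_r in Hle. exact Hle.
Qed.

Lemma improper_trapezoid_error (g g1 g2 H : R -> R) (h L B : R) :
  (forall x, is_derive g x (g1 x)) -> (forall x, is_derive g1 x (g2 x)) ->
  (forall x, continuous g2 x) -> (forall x, continuous H x) ->
  (forall x, 0 <= x -> Rabs (g2 x) <= H x) -> (forall x, 0 <= x -> 0 <= g x) ->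
  is_lim g p_infty 0 ->
  is_RInt_gen g (at_point 0) (Rbar_locally p_infty) L ->
  is_RInt_gen H (at_point 0) (Rbar_locally p_infty) B ->
  0 < h ->
  exists Fs, is_series (fun n => g (INR (S n) * h)) Fs /\
    Rabs (h / 2 * (g 0 + 2 * Fs) - L) <= h ^ 2 / 8 * B.
Proof.
  intros Hg1 Hg2 Hg2c HHc Hmaj Hgpos Hlim HL HB Hh.
  apply trapezoid_series_limit with (y := fun N => g (INR N * h))
    (I := fun N => RInt g 0 (INR N * h)); [exact Hh| | | |].
  - intros n. apply Hgpos, Rmult_le_pos; [apply pos_INR|lra].
  - exact (filterlim_comp _ _ _ _ _ _ _ _ (is_lim_seq_INR_scal h Hh) Hlim).
  - exact (is_lim_seq_RInt_grid g L h Hh HL).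
  - intros N. eapply Rle_trans;
      [exact (trapezoid_composite_error g g1 g2 H h Hg1 Hg2 Hg2c HHc Hmaj Hh N)|].
    apply Rmult_le_compat_l; [assert (0 <= h ^ 2) by apply pow2_ge_0; lra|].
    apply RInt_le_is_RInt_gen; [|apply Rmult_le_pos; [apply pos_INR|lra]|exact HB].
    intros x Hx. eapply Rle_trans; [apply Rabs_pos|exact (Hmaj x Hx)].
Qed.

Lemma derive_on_nonneg_eps (phi : R -> R) (x l eps : R) :
  derive_on_nonneg phi x l -> 0 < eps ->
  exists del, 0 < del /\ forall y, 0 <= y -> y <> x -> Rabs (y - x) < del ->
    Rabs ((phi y - phi x) / (y - x) - l) < eps.
Proof.
  intros Hphi Heps.
  destruct (Hphi (ball l eps) (locally_ball l (mkposreal eps Heps))) as [del Hdel].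
  exists del. split; [apply cond_pos|].
  intros y Hy Hyx Hd. apply Hdel; [exact Hd|]. split; assumption.
Qed.

Definition glue (phi p : R -> R) (y : R) : R := if Rle_dec 0 y then phi y else p y.

Lemma glue_nonneg (phi p : R -> R) (x : R) : 0 <= x -> glue phi p x = phi x.
Proof. intros Hx. unfold glue. destruct (Rle_dec 0 x); [reflexivity|contradiction]. Qed.

Lemma is_derive_glue (phi psi p q : R -> R) :
  (forall x, 0 <= x -> derive_on_nonneg phi x (psi x)) ->
  (forall x, is_derive p x (q x)) -> p 0 = phi 0 -> q 0 = psi 0 ->
  forall x, is_derive (glue phi p) x (glue psi q x).
Proof.
  intros Hphi Hp Hp0 Hq0 x. apply is_derive_Reals. intros eps Heps. unfold glue.
  destruct (Rtotal_order x 0) as [Hx|[->|Hx]].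
  - destruct (proj1 (is_derive_Reals _ _ _) (Hp x) eps Heps) as [del Hdel].
    assert (Hpos : 0 < Rmin del (- x)) by (apply Rmin_pos; [apply cond_pos|lra]).
    exists (mkposreal _ Hpos). intros k Hk Hkd. simpl in Hkd.
    assert (Hk1 := Rmin_l del (- x)). assert (Hk2 := Rmin_r del (- x)).
    assert (Habs := Rle_abs k).
    destruct (Rle_dec 0 (x + k)); [lra|]. destruct (Rle_dec 0 x); [lra|].
    apply Hdel; [exact Hk|lra].
  - destruct (proj1 (is_derive_Reals _ _ _) (Hp 0) eps Heps) as [del Hdel].
    destruct (derive_on_nonneg_eps _ _ _ _ (Hphi 0 (Rle_refl 0)) Heps) as [del' [Hdel' Hphi0]].
    assert (Hpos : 0 < Rmin del del') by (apply Rmin_pos; [apply cond_pos|lra]).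
    exists (mkposreal _ Hpos). intros k Hk Hkd. simpl in Hkd.
    assert (Hk1 := Rmin_l del del'). assert (Hk2 := Rmin_r del del').
    destruct (Rle_dec 0 0); [|lra].
    destruct (Rle_dec 0 (0 + k)).
    + replace k with (0 + k - 0) at 2 by ring. apply Hphi0; [lra|lra|].
      replace (0 + k - 0) with k by ring. lra.
    + rewrite <- Hp0, <- Hq0. apply Hdel; [exact Hk|lra].
  - destruct (derive_on_nonneg_eps _ _ _ _ (Hphi x (Rlt_le _ _ Hx)) Heps) as [del [Hdel Hphix]].
    assert (Hpos : 0 < Rmin x del) by (apply Rmin_pos; lra).
    exists (mkposreal _ Hpos). intros k Hk Hkd. simpl in Hkd.
    assert (Hk1 := Rmin_l x del). assert (Hk2 := Rmin_r x del).
    assert (Habs := Rle_abs (- k)). rewrite Rabs_Ropp in Habs.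
    destruct (Rle_dec 0 (x + k)); [|lra]. destruct (Rle_dec 0 x); [|lra].
    replace k with (x + k - x) at 2 by ring. apply Hphix; [lra|lra|].
    replace (x + k - x) with k by ring. lra.
Qed.

(* Integrating by parts on [0, h] needs two-sided derivatives at 0, so d 0, ..., d 3 are
   continued to x < 0 by their Taylor polynomials at 0. *)
Definition ext3 (d : nat -> R -> R) : R -> R := glue (d 3%nat) (fun _ => d 3%nat 0).
Definition ext2 (d : nat -> R -> R) : R -> R :=
  glue (d 2%nat) (fun x => d 2%nat 0 + d 3%nat 0 * x).
Definition ext1 (d : nat -> R -> R) : R -> R :=
  glue (d 1%nat) (fun x => d 1%nat 0 + d 2%nat 0 * x + d 3%nat 0 * x ^ 2 / 2).
Definition ext0 (d : nat -> R -> R) : R -> R :=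
  glue (d 0%nat)
    (fun x => d 0%nat 0 + d 1%nat 0 * x + d 2%nat 0 * x ^ 2 / 2 + d 3%nat 0 * x ^ 3 / 6).

Lemma is_derive_ext (f : R -> R) (d : nat -> R -> R) : C4_nonneg f d -> forall x,
  is_derive (ext0 d) x (ext1 d x) /\ is_derive (ext1 d) x (ext2 d x) /\
  is_derive (ext2 d) x (ext3 d x).
Proof.
  intros [_ [Hd _]] x. split; [|split]; apply is_derive_glue;
    try (intros y Hy; apply Hd; [lia|exact Hy]);
    try (intros y; auto_derive; [exact I|simpl; field]); simpl; field.
Qed.

Lemma ext_nonneg (d : nat -> R -> R) (x : R) : 0 <= x ->
  ext0 d x = d 0%nat x /\ ext1 d x = d 1%nat x /\ ext2 d x = d 2%nat x.
Proof. intros Hx. unfold ext0, ext1, ext2. rewrite !glue_nonneg by exact Hx. now repeat split. Qed.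

Lemma is_derive_exp_weight (c : R) (e e' : R -> R) (x : R) :
  is_derive e x (e' x) ->
  is_derive (fun y => exp (- c * y) * e y) x (exp (- c * x) * (e' x - c * e x)).
Proof.
  intros He. auto_derive.
  - exists (e' x). exact He.
  - rewrite (is_derive_unique (fun y : R => e y) x _ He). ring.
Qed.

Lemma weighted_second_derivative_bound (a c M x e0 e1 e2 : R) :
  0 <= x -> a <= c -> Rabs c <= M ->
  Rabs (exp (- c * x) * ((e2 - c * e1) - c * (e1 - c * e0)))
  <= Rabs (exp (- a * x) * e2) + 2 * M * Rabs (exp (- a * x) * e1)
     + M ^ 2 * Rabs (exp (- a * x) * e0).
Proof.
  intros Hx Hac HcM.
  assert (Hexp : exp (- c * x) <= exp (- a * x)).
  { assert (Harg : - c * x <= - a * x) by nra.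
    destruct Harg as [Hlt|Heq]; [left; apply exp_increasing, Hlt|right; rewrite Heq; reflexivity]. }
  assert (Hc2 : c ^ 2 <= M ^ 2)
    by (rewrite <- (pow2_abs c); assert (Hc := Rabs_pos c); nra).
  assert (Hpoly : Rabs ((e2 - c * e1) - c * (e1 - c * e0))
                  <= Rabs e2 + 2 * M * Rabs e1 + M ^ 2 * Rabs e0).
  { replace ((e2 - c * e1) - c * (e1 - c * e0)) with (e2 + (- (2 * c) * e1 + c ^ 2 * e0)) by ring.
    assert (T1 := Rabs_triang e2 (- (2 * c) * e1 + c ^ 2 * e0)).
    assert (T2 := Rabs_triang (- (2 * c) * e1) (c ^ 2 * e0)).
    rewrite !Rabs_mult, Rabs_Ropp, Rabs_mult, (Rabs_pos_eq 2), (Rabs_pos_eq (c ^ 2)) in T2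
      by (apply pow2_ge_0 || lra).
    assert (He1 := Rabs_pos e1). assert (He0 := Rabs_pos e0). nra. }
  rewrite !Rabs_mult, !(Rabs_pos_eq (exp _)) by apply Rlt_le, exp_pos.
  assert (Hpos := exp_pos (- c * x)).
  assert (Hnn := Rabs_pos ((e2 - c * e1) - c * (e1 - c * e0))).
  assert (HM : 0 <= M) by (assert (Hc := Rabs_pos c); lra).
  assert (He1 := Rabs_pos e1). assert (He0 := Rabs_pos e0). assert (He2 := Rabs_pos e2).
  apply Rle_trans with (exp (- a * x) * (Rabs e2 + 2 * M * Rabs e1 + M ^ 2 * Rabs e0));
    [|right; ring].
  apply Rmult_le_compat; [lra|exact Hnn|exact Hexp|exact Hpoly].
Qed.

Lemma continuous_exp_weight (c : R) (e : R -> R) :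
  (forall x, ex_derive e x) -> forall x, continuous (fun y => exp (- c * y) * e y) x.
Proof.
  intros He x. apply (ex_derive_continuous (K := R_AbsRing) (V := R_NormedModule)).
  auto_derive. apply He.
Qed.

Lemma is_RInt_gen_exp_weight_majorant (d : nat -> R -> R) (a M A0 A1 A2 : R) :
  is_RInt_gen (fun x => Rabs (exp (- a * x) * d 0%nat x)) (at_point 0) (Rbar_locally p_infty) A0 ->
  is_RInt_gen (fun x => Rabs (exp (- a * x) * d 1%nat x)) (at_point 0) (Rbar_locally p_infty) A1 ->
  is_RInt_gen (fun x => Rabs (exp (- a * x) * d 2%nat x)) (at_point 0) (Rbar_locally p_infty) A2 ->
  is_RInt_gen (fun x => Rabs (exp (- a * x) * ext2 d x) + 2 * M * Rabs (exp (- a * x) * ext1 d x)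
                        + M ^ 2 * Rabs (exp (- a * x) * ext0 d x))
    (at_point 0) (Rbar_locally p_infty) (A2 + 2 * M * A1 + M ^ 2 * A0).
Proof.
  intros HA0 HA1 HA2.
  apply (is_RInt_gen_plus (V := R_NormedModule));
    [apply (is_RInt_gen_plus (V := R_NormedModule))|];
    [|apply (is_RInt_gen_scal (V := R_NormedModule))..];
    (eapply is_RInt_gen_ext_nonneg; [|eassumption]);
    intros x Hx; destruct (ext_nonneg d x Hx) as [E0 [E1 E2]]; rewrite ?E0, ?E1, ?E2; reflexivity.
Qed.

Section LaplaceTrapezoid.

Variables (f : R -> R) (d : nat -> R -> R).
Hypothesis f_nonneg : forall x, 0 <= x -> 0 <= f x.
Hypothesis f0 : f 0 = 1.
Hypothesis fC4 : C4_nonneg f d.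

Let ext0_nonneg x : 0 <= x -> ext0 d x = f x.
Proof. intros Hx. unfold ext0. rewrite glue_nonneg by exact Hx. apply (proj1 fC4), Hx. Qed.

Lemma laplace_trapezoid_error (a M c h A0 A1 A2 L : R) :
  a <= c -> Rabs c <= M -> 0 < h ->
  is_RInt_gen (fun x => Rabs (exp (- a * x) * d 0%nat x)) (at_point 0) (Rbar_locally p_infty) A0 ->
  is_RInt_gen (fun x => Rabs (exp (- a * x) * d 1%nat x)) (at_point 0) (Rbar_locally p_infty) A1 ->
  is_RInt_gen (fun x => Rabs (exp (- a * x) * d 2%nat x)) (at_point 0) (Rbar_locally p_infty) A2 ->
  is_RInt_gen (fun x => exp (- c * x) * f x) (at_point 0) (Rbar_locally p_infty) L ->
  is_lim (fun x => exp (- c * x) * d 0%nat x) p_infty 0 ->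
  exists Fs, is_series (fun n => exp (- c * (INR (S n) * h)) * f (INR (S n) * h)) Fs /\
    Rabs (h / 2 * (1 + 2 * Fs) - L) <= h ^ 2 / 8 * (A2 + 2 * M * A1 + M ^ 2 * A0).
Proof.
  intros Hac HcM Hh HA0 HA1 HA2 HL Hlim.
  pose proof (is_derive_ext f d fC4) as Hext.
  assert (X0 : forall x, ex_derive (ext0 d) x) by (intros x; exists (ext1 d x); apply Hext).
  assert (X1 : forall x, ex_derive (ext1 d) x) by (intros x; exists (ext2 d x); apply Hext).
  assert (X2 : forall x, ex_derive (ext2 d) x) by (intros x; exists (ext3 d x); apply Hext).
  set (H x := Rabs (exp (- a * x) * ext2 d x) + 2 * M * Rabs (exp (- a * x) * ext1 d x)
              + M ^ 2 * Rabs (exp (- a * x) * ext0 d x)).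
  destruct (improper_trapezoid_error (fun x => exp (- c * x) * ext0 d x)
    (fun x => exp (- c * x) * (ext1 d x - c * ext0 d x))
    (fun x => exp (- c * x) * ((ext2 d x - c * ext1 d x) - c * (ext1 d x - c * ext0 d x)))
    H h L (A2 + 2 * M * A1 + M ^ 2 * A0)) as [Fs [HFs Herr]].
  - intros x. apply is_derive_exp_weight, Hext.
  - intros x. apply (is_derive_exp_weight c (fun y => ext1 d y - c * ext0 d y)
                       (fun y => ext2 d y - c * ext1 d y)).
    apply (is_derive_minus (ext1 d) (fun y => c * ext0 d y)); [apply Hext|].
    apply is_derive_scal, Hext.
  - apply continuous_exp_weight. intros x. auto_derive. repeat split; auto.
  - intros x. unfold H. repeat apply (continuous_plus (V := R_NormedModule));
      try apply (continuous_mult (K := R_AbsRing) (fun _ => _)); try apply continuous_const;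
      apply continuous_Rabs_comp, continuous_exp_weight; assumption.
  - intros x Hx. apply weighted_second_derivative_bound; assumption.
  - intros x Hx. rewrite ext0_nonneg by exact Hx.
    apply Rmult_le_pos; [apply Rlt_le, exp_pos|apply f_nonneg, Hx].
  - apply (is_lim_ext_loc (fun x => exp (- c * x) * d 0%nat x)); [|exact Hlim].
    exists 0. intros x Hx. rewrite (proj1 (ext_nonneg d x ltac:(lra))). reflexivity.
  - apply (is_RInt_gen_ext_nonneg (fun x => exp (- c * x) * f x)); [|exact HL].
    intros x Hx. rewrite ext0_nonneg by exact Hx. reflexivity.
  - apply is_RInt_gen_exp_weight_majorant; assumption.
  - exact Hh.
  - exists Fs. split.
    + refine (is_series_ext _ _ Fs _ HFs).
      intros n. rewrite ext0_nonneg by (apply Rmult_le_pos; [apply pos_INR|lra]). reflexivity.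
    + rewrite ext0_nonneg, f0, Rmult_0_r, exp_0, Rmult_1_l in Herr by lra. exact Herr.
Qed.
End LaplaceTrapezoid.

Lemma log_scaling_bounds (q x : R) : 0 < q -> 2 * Rabs x <= q ->
  x <= - q * ln (1 - x / q) <= 2 * Rabs x.
Proof.
  intros Hq Hx.
  assert (Hax := Rle_abs x). assert (Hanx := Rle_abs (- x)). rewrite Rabs_Ropp in Hanx.
  set (rho := 1 - x / q).
  assert (Hrho : 1 / 2 <= rho).
  { unfold rho. apply Rmult_le_reg_r with q; [exact Hq|]. unfold Rdiv. field_simplify; lra. }
  assert (Hx_rho : x = q * (1 - rho)) by (unfold rho; field; lra).
  assert (Hln_le : ln rho <= rho - 1).
  { assert (H := exp_ineq1_le (ln rho)). rewrite exp_ln in H; lra. }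
  assert (Hln_ge : - ln rho <= / rho - 1).
  { assert (H := exp_ineq1_le (ln (/ rho))).
    rewrite exp_ln, ln_Rinv in H by (try apply Rinv_0_lt_compat; lra). lra. }
  split; [nra|].
  apply Rle_trans with (q * (/ rho - 1)); [nra|].
  replace (q * (/ rho - 1)) with (x / rho) by (rewrite Hx_rho; field; lra).
  apply Rmult_le_reg_r with rho; [lra|].
  replace (x / rho * rho) with x by (field; lra). nra.
Qed.

Lemma Fs_term_weighted (f : R -> R) (s gam : R) (n : nat) :
  0 < sqrt s -> 0 < rho_of s gam ->
  Fs_term f s (rho_of s gam) n
  = exp (- gamma_s s gam * (INR (S n) * / sqrt s)) * f (INR (S n) * / sqrt s).
Proof.
  intros Hq Hrho. unfold Fs_term, gamma_s. fold (rho_of s gam).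
  rewrite <- (Rpower_pow (S n) _ Hrho). unfold Rpower, Rdiv.
  rewrite Rmult_comm. f_equal. f_equal. field. lra.
Qed.

Lemma gamma_s_bounds (a b s gam : R) :
  Rmax 1 (4 * (a ^ 2 + b ^ 2)) <= s -> a <= gam <= b ->
  1 <= sqrt s /\ 0 < rho_of s gam /\ a <= gamma_s s gam /\
  Rabs (gamma_s s gam) <= 2 * (Rabs a + Rabs b).
Proof.
  intros Hs Hgam.
  assert (Hs1 := Rle_trans _ _ _ (Rmax_l _ _) Hs).
  assert (Hs2 := Rle_trans _ _ _ (Rmax_r _ _) Hs).
  unfold rho_of, gamma_s. set (q := sqrt s).
  assert (Hq : 1 <= q) by (rewrite <- sqrt_1; apply sqrt_le_1_alt; lra).
  assert (Hqq : q * q = s) by (apply sqrt_sqrt; lra).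
  assert (Hga := Rle_abs gam). assert (Hnga := Rle_abs (- gam)). rewrite Rabs_Ropp in Hnga.
  assert (Hgam_abs : Rabs gam <= Rabs a + Rabs b).
  { assert (Ha' := Rle_abs (- a)). assert (Hb' := Rle_abs b). rewrite Rabs_Ropp in Ha'.
    apply Rabs_le. assert (Hpa := Rabs_pos a). assert (Hpb := Rabs_pos b). lra. }
  assert (Hgq : 2 * Rabs gam <= q).
  { assert (Hg2 : gam ^ 2 <= a ^ 2 + b ^ 2) by (destruct (Rle_or_lt 0 gam); nra).
    rewrite <- (pow2_abs gam) in Hg2. assert (Hpg := Rabs_pos gam).
    destruct (Rle_or_lt (2 * Rabs gam) q) as [|Hlt]; [assumption|].
    assert (q * q < (2 * Rabs gam) * (2 * Rabs gam)) by (apply Rmult_le_0_lt_compat; lra).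
    simpl in Hg2. lra. }
  destruct (log_scaling_bounds q gam ltac:(lra) Hgq) as [Hc1 Hc2].
  assert (Hratio : gam / q <= 1 / 2).
  { apply Rmult_le_reg_r with q; [lra|]. unfold Rdiv.
    rewrite Rmult_assoc, Rinv_l, Rmult_1_r by lra. lra. }
  repeat split; try lra. apply Rabs_le. lra.
Qed.

Theorem theorem4p1 (f : R -> R) (d : nat -> R -> R)
  (f_nonneg : forall x, 0 <= x -> 0 <= f x)
  (f_noninc : forall x y, 0 <= x -> x <= y -> f y <= f x)
  (f0 : f 0 = 1)
  (fC4 : C4_nonneg f d)
  (f_L1 : forall gam j, Rbar_lt (gamma_min f) (Finite gam) -> (j <= 4)%nat ->
            integrable_0_infty (fun x => Rabs (exp (- gam * x) * d j x)))
  (f_lim : forall gam j, Rbar_lt (gamma_min f) (Finite gam) -> (j <= 4)%nat ->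
            is_lim (fun x => exp (- gam * x) * d j x) p_infty 0) :
  forall a b : R, Rbar_lt (gamma_min f) (Finite a) ->
  exists C S0 : R, 1 <= S0 /\
    forall s gam, S0 <= s -> a <= gam <= b -> gam <= sqrt s ->
      exists Fs Lv : R,
        is_series (Fs_term f s (rho_of s gam)) Fs /\
        has_integral_0_infty (fun x => exp (- gamma_s s gam * x) * f x) Lv /\
        Rabs (Fs - (sqrt s * Lv - 1 / 2)) <= C / sqrt s.
Proof.
  intros a b Ha.
  destruct (f_L1 a 0%nat Ha ltac:(lia)) as [A0 HA0].
  destruct (f_L1 a 1%nat Ha ltac:(lia)) as [A1 HA1].
  destruct (f_L1 a 2%nat Ha ltac:(lia)) as [A2 HA2].
  set (M := 2 * (Rabs a + Rabs b)).
  set (B := A2 + 2 * M * A1 + M ^ 2 * A0).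
  exists (B / 8), (Rmax 1 (4 * (a ^ 2 + b ^ 2))). split; [apply Rmax_l|].
  intros s gam Hs Hgam _.
  destruct (gamma_s_bounds a b s gam Hs Hgam) as [Hq [Hrho [Hac HcM]]].
  set (c := gamma_s s gam) in *. set (q := sqrt s) in *.
  assert (Hcmin : Rbar_lt (gamma_min f) (Finite c))
    by (apply Rbar_lt_le_trans with (Finite a); [exact Ha|exact Hac]).
  destruct (f_L1 c 0%nat Hcmin ltac:(lia)) as [L HL].
  apply is_RInt_gen_ext_nonneg with (psi := fun x => exp (- c * x) * f x) in HL.
  2:{ intros x Hx. rewrite (proj1 fC4 x Hx).
      apply Rabs_pos_eq, Rmult_le_pos; [apply Rlt_le, exp_pos|apply f_nonneg, Hx]. }
  assert (Hh : 0 < / q) by (apply Rinv_0_lt_compat; lra).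
  destruct (laplace_trapezoid_error f d f_nonneg f0 fC4 a M c (/ q) A0 A1 A2 L Hac HcM Hh
              HA0 HA1 HA2 HL ltac:(apply f_lim; [exact Hcmin|lia])) as [Fs [HFs Herr]].
  exists Fs, L. split; [|split; [exact HL|]].
  - refine (is_series_ext _ _ Fs _ HFs). intros n.
    symmetry. apply Fs_term_weighted; [fold q; lra|exact Hrho].
  - replace (Fs - (q * L - 1 / 2)) with (q * (/ q / 2 * (1 + 2 * Fs) - L)) by (field; lra).
    rewrite Rabs_mult, (Rabs_pos_eq q) by lra.
    replace (B / 8 / q) with (q * ((/ q) ^ 2 / 8 * B)) by (field; lra).
    apply Rmult_le_compat_l; [lra|exact Herr].
Qed.
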